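(* Let $k$ be a field, $R$ a unital associative $k$-algebra, and let $\mathsf{P}_f(R)$ be the exact category of finitely generated projective (right) $R$-modules. Let $``R((t))''$ be the object of $\mathsf{Tate}_{\aleph_0}(\mathsf{P}_f(R))$ given by the Ind-Pro diagram $\underset{n}{\mathrm{colim}}\,\underset{m}{\lim}\, t^{-n}R[t]/t^mR[t]$ (equivalently $\coprod_{\mathbb{N}}R\oplus\prod_{\mathbb{N}}R$), and let $E(R):=\operatorname{End}_{\mathsf{Tate}_{\aleph_0}(\mathsf{P}_f(R))}(``R((t))'')$. Then there is a canonical isomorphism of unital associative algebras \[ E(R)\xrightarrow{\ \sim\ }\left\{\varphi\in\operatorname{End}_R(R((t)))\ \middle|\ \begin{array}{l}\text{(1) for every } n\in\mathbb{Z} \text{ there is } n'\in\mathbb{Z} \text{ with } \varphi(t^nR[[t]])\subseteq t^{n'}R[[t]],\text{ and}\\ \text{(2) for every } m\in\mathbb{Z} \text{ there is } m'\in\mathbb{Z} \text{ with } \varphi(t^{m'}R[[t]])\subseteq t^{m}R[[t]]\end{array}\right\}, \] where $R((t))=R[[t]][t^{-1}]$ is the $R$-module of formal Laurent series and the right-hand side is a subalgebra of $\operatorname{End}_R(R((t)))$ under composition. In particular, the Lie algebra $\mathfrak{gl}_{\mathrm{top}}(\infty,R)$ of $E(R)$ is the Lie algebra of this subalgebra of $\operatorname{End}_R(R((t)))$ under the commutator bracket.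
   Context: For an exact category $\mathcal{C}$: $\mathsf{Ind}^a_{\aleph_0}(\mathcal{C})$ denotes the category of Ind-objects represented by diagrams $X_\bullet:I\to\mathcal{C}$ indexed by countable directed posets $I$ whose transition maps are admissible monics, with $\operatorname{Hom}(X_\bullet,Y_\bullet)=\lim_i\operatorname{colim}_j\operatorname{Hom}_{\mathcal{C}}(X_i,Y_j)$; it carries the exact structure whose short exact sequences are those isomorphic to Ind-diagrams of short exact sequences of $\mathcal{C}$. Dually $\mathsf{Pro}^a_{\aleph_0}(\mathcal{C}):=\mathsf{Ind}^a_{\aleph_0}(\mathcal{C}^{op})^{op}$ (Pro-diagrams with admissible epic transition maps). Both embed in $\mathsf{Ind}^a_{\aleph_0}(\mathsf{Pro}^a_{\aleph_0}(\mathcal{C}))$ (as diagrams constant in the other direction). The category $\mathsf{Tate}^{el}_{\aleph_0}(\mathcal{C})$ is the full (extension-closed, hence exact) subcategory of $\mathsf{Ind}^a_{\aleph_0}(\mathsf{Pro}^a_{\aleph_0}(\mathcal{C}))$ consisting of objects $X$ admitting an admissible short exact sequence $L\hookrightarrow X\twoheadrightarrow X/L$ with $L\in\mathsf{Pro}^a_{\aleph_0}(\mathcal{C})$ and $X/L\in\mathsf{Ind}^a_{\aleph_0}(\mathcal{C})$ (such $L$ are called lattices). $\mathsf{Tate}_{\aleph_0}(\mathcal{C})$ is the idempotent completion of $\mathsf{Tate}^{el}_{\aleph_0}(\mathcal{C})$. *)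

(* Concrete unfolding of End_{Tate}("R((t))") via the
   Ind-Pro Hom formula  Hom = lim colim (lim colim Hom_C). *)
From HB Require Import structures.
From mathcomp Require Import all_boot all_order all_algebra.
Set Implicit Arguments. Unset Strict Implicit. Unset Printing Implicit Defensive.
Import Order.TTheory GRing.Theory Num.Theory.
Local Open Scope ring_scope.

Definition Quot (T : Type) (e : T -> T -> Prop) : Type :=
  {P : T -> Prop | exists x, e x x /\ forall y, P y <-> e x y}.

Section TateLaurent.
Variables (k : fieldType) (R : algType k).

(* Maps between submodules of R^Z (functions int -> R). *)
Definition Fn := (int -> R) -> (int -> R).

(* window of the module t^{-a}R[t]/t^b R[t], i.e. coefficients of t^i,
   -a <= i < b *)
Definition inW (a b : nat) (i : int) : bool := (- (a%:Z) <= i) && (i < b%:Z).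

Definition res (a b : nat) (f : int -> R) : int -> R :=
  fun i => if inW a b i then f i else 0.

(* g encodes a right R-linear map
     t^{-a}R[t]/t^bR[t] --> t^{-c}R[t]/t^dR[t]
   (a morphism of P_f(R)): it only depends on the coefficients in the
   source window, takes values in the target window, and is additive and
   right R-linear. *)
Definition isHomC (a b c d : nat) (g : Fn) : Prop :=
  [/\ forall f f', (forall i, inW a b i -> f i = f' i) -> g f = g f',
      forall f i, ~~ inW c d i -> g f i = 0,
      forall f f', g (fun i => f i + f' i) = (fun i => g f i + g f' i)
    & forall f (r : R), g (fun i => f i * r) = (fun i => g f i * r)].

(* the morphism g composed with the transition maps of the diagrams
   (restriction to new source window, projection/inclusion to the new
   target window) *)
Definition rrf (a' b' c' d' : nat) (g : Fn) : Fn :=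
  fun f => res c' d' (g (res a' b' f)).

(* colim_b Hom_C(M_{a,b}, M_{c,d}) *)
Definition eqB (a c d : nat) (p q : nat * Fn) : Prop :=
  [/\ isHomC a p.1 c d p.2, isHomC a q.1 c d q.2 &
      exists b3, [/\ (p.1 <= b3)%N, (q.1 <= b3)%N &
                     rrf a b3 c d p.2 = rrf a b3 c d q.2]].
Definition ClB (a c d : nat) := Quot (eqB a c d).

(* Hom_Pro(P_a, P_c) = lim_d colim_b Hom_C(M_{a,b}, M_{c,d}),
   where P_a is the Pro-object  m |-> t^{-a}R[t]/t^mR[t] *)
Definition isProHom (a c : nat) (x : forall d, ClB a c d) : Prop :=
  forall d d' (p : nat * Fn), (d <= d')%N -> sval (x d') p ->
    sval (x d) (p.1, rrf a p.1 c d p.2).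

(* colim_c Hom_Pro(P_a, P_c) *)
Definition RawC (a : nat) := {c : nat & forall d, ClB a c d}.
Definition eqC (a : nat) (q1 q2 : RawC a) : Prop :=
  [/\ isProHom (projT2 q1), isProHom (projT2 q2) &
      exists c3, [/\ (projT1 q1 <= c3)%N, (projT1 q2 <= c3)%N &
        forall d p1 p2, sval (projT2 q1 d) p1 -> sval (projT2 q2 d) p2 ->
          eqB a c3 d (p1.1, rrf a p1.1 c3 d p1.2)
                     (p2.1, rrf a p2.1 c3 d p2.2)]].
Definition ClC (a : nat) := Quot (@eqC a).

(* lim_a colim_c Hom_Pro(P_a, P_c) = End_{Ind(Pro(P_f(R)))}("R((t))") *)
Definition isIndHom (e : forall a, ClC a) : Prop :=
  forall a a' (q : RawC a'), (a <= a')%N -> sval (e a') q ->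
    exists q0 : RawC a, [/\ sval (e a) q0, projT1 q0 = projT1 q &
      forall d p p0, sval (projT2 q d) p -> sval (projT2 q0 d) p0 ->
        eqB a (projT1 q) d p0 (p.1, rrf a p.1 (projT1 q) d p.2)].

Definition EndLaurent := {e : forall a, ClC a | isIndHom e}.

(* Algebra structure on EndLaurent (graphs of the operations). *)
Definition IsCompE (e1 e2 e3 : EndLaurent) : Prop :=
  forall a (q2 : RawC a) (q1 : RawC (projT1 q2)) (q3 : RawC a),
    sval (sval e2 a) q2 -> sval (sval e1 (projT1 q2)) q1 ->
    sval (sval e3 a) q3 ->
    exists c3, [/\ (projT1 q1 <= c3)%N, (projT1 q3 <= c3)%N &
      forall d p1 p2 p3, sval (projT2 q1 d) p1 -> sval (projT2 q2 p1.1) p2 ->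
        sval (projT2 q3 d) p3 ->
        eqB a c3 d (p2.1, rrf a p2.1 c3 d (p1.2 \o p2.2))
                   (p3.1, rrf a p3.1 c3 d p3.2)].

Definition IsIdE (e : EndLaurent) : Prop :=
  forall a (q : RawC a), sval (sval e a) q ->
    exists c3, [/\ (a <= c3)%N, (projT1 q <= c3)%N &
      forall d p, sval (projT2 q d) p ->
        eqB a c3 d (d, rrf a d c3 d id) (p.1, rrf a p.1 c3 d p.2)].

Definition IsAddE (e1 e2 e3 : EndLaurent) : Prop :=
  forall a (q1 q2 q3 : RawC a),
    sval (sval e1 a) q1 -> sval (sval e2 a) q2 -> sval (sval e3 a) q3 ->
    exists c3, [/\ (projT1 q1 <= c3)%N, (projT1 q2 <= c3)%N,
                   (projT1 q3 <= c3)%N &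
      forall d p1 p2 p3, sval (projT2 q1 d) p1 -> sval (projT2 q2 d) p2 ->
        sval (projT2 q3 d) p3 ->
        eqB a c3 d (maxn p1.1 p2.1,
                    fun f i => rrf a (maxn p1.1 p2.1) c3 d p1.2 f i
                             + rrf a (maxn p1.1 p2.1) c3 d p2.2 f i)
                   (p3.1, rrf a p3.1 c3 d p3.2)].

Definition IsScaleE (s : k) (e1 e2 : EndLaurent) : Prop :=
  forall a (q1 q2 : RawC a),
    sval (sval e1 a) q1 -> sval (sval e2 a) q2 ->
    exists c3, [/\ (projT1 q1 <= c3)%N, (projT1 q2 <= c3)%N &
      forall d p1 p2, sval (projT2 q1 d) p1 -> sval (projT2 q2 d) p2 ->
        eqB a c3 d (p1.1, fun f i => s *: rrf a p1.1 c3 d p1.2 f i)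
                   (p2.1, rrf a p2.1 c3 d p2.2)].

Definition LS := {f : int -> R | exists N : int, forall i, i < N -> f i = 0}.

Definition tpow (n : int) (f : int -> R) : Prop := forall i, i < n -> f i = 0.

Definition isEndR (phi : LS -> LS) : Prop :=
  (forall f g h : LS, (forall i, sval h i = sval f i + sval g i) ->
     forall i, sval (phi h) i = sval (phi f) i + sval (phi g) i) /\
  (forall (f g : LS) (r : R), (forall i, sval g i = sval f i * r) ->
     forall i, sval (phi g) i = sval (phi f) i * r).

Definition cond1 (phi : LS -> LS) : Prop :=
  forall n : int, exists n' : int, forall f : LS,
    tpow n (sval f) -> tpow n' (sval (phi f)).
Definition cond2 (phi : LS -> LS) : Prop :=
  forall m : int, exists m' : int, forall f : LS,
    tpow m' (sval f) -> tpow m (sval (phi f)).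

Definition EndTop := {phi : LS -> LS | [/\ isEndR phi, cond1 phi & cond2 phi]}.

(* phi is the endomorphism of R((t)) = colim_a lim_b M_{a,b} induced by e:
   on t^{-a}R[[t]] = lim_b M_{a,b}, e is represented by a Pro-morphism
   P_a -> P_c whose level-d component is g, so phi maps t^{-a}R[[t]]
   into t^{-c}R[[t]] and the window-(c,d) part of phi f is g f. *)
Definition Canon (e : EndLaurent) (phi : LS -> LS) : Prop :=
  forall a (q : RawC a), sval (sval e a) q ->
    forall d p, sval (projT2 q d) p ->
      forall f : LS, tpow (- (a%:Z)) (sval f) ->
        tpow (- ((projT1 q)%:Z)) (sval (phi f)) /\
        forall i, inW (projT1 q) d i -> sval (phi f) i = p.2 (sval f) i.

End TateLaurent.

(* An element of E(R) is a compatible system of classes of window maps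
   t^{-a}R[t]/t^bR[t] -> t^{-c}R[t]/t^dR[t], and every identification made by
   the limits and colimits in its definition compares window maps only through
   their values.  Hence, for f in t^{-a}R[[t]] and i < d, the i-th coefficient
   of the image of f can be read off any level-d component of any representative
   at a, independently of all choices; these coefficients glue to an
   endomorphism phi of R((t)).  The target index c of a Pro-morphism gives
   condition (1), and the finite source window b of a level-m component gives
   condition (2).  Conversely, for phi satisfying (1) and (2), the window maps
   res_{c,d} o phi o res_{a,b} (c from (1), b from (2)) agree with phi in
   degrees < d, and the classes of all window maps agreeing with phi form an
   element of E(R).  Both directions, as well as composition, identity, sum and
   scaling, are characterised by "agreement with phi below degree d", which
   makes the two constructions inverse algebra isomorphisms. *)

From Pilot Require Import Defs.
From HB Require Import structures.
From mathcomp Require Import all_boot all_order all_algebra zify.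
From Stdlib Require Import FunctionalExtensionality PropExtensionality.
From Stdlib Require Import ProofIrrelevance ClassicalEpsilon.
Import Order.TTheory GRing.Theory Num.Theory.
Local Open Scope ring_scope.

Section EndLaurentTop.
Local Set Implicit Arguments.
Local Unset Strict Implicit.
Variables (k : fieldType) (R : algType k).
Local Notation Fn := (Fn R).
Local Notation LS := (LS R).
Implicit Types (a b c d : nat) (f : int -> R) (g : Fn).

Lemma sig_ext (A : Type) (P : A -> Prop) (u v : {x | P x}) :
  sval u = sval v -> u = v.
Proof. exact: eq_sig_hprop (fun x => proof_irrelevance (P x)) u v. Qed.

Lemma LS_ext (f g : LS) : sval f =1 sval g -> f = g.
Proof. by move=> fg; apply: sig_ext; apply: functional_extensionality. Qed.

Lemma tpow_le (m n : int) f : m <= n -> tpow n f -> tpow m f.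
Proof. by move=> mn fn i im; apply: fn; lia. Qed.

Lemma LS_tpow_ex (f : LS) : exists a : nat, tpow (- a%:Z) (sval f).
Proof. by case: f => f [N fN] /=; exists `|N|%N => i hi; apply: fN; lia. Qed.

Lemma inW_widen a a' b b' i :
  (a <= a')%N -> (b <= b')%N -> inW a b i -> inW a' b' i.
Proof. by rewrite /inW; lia. Qed.

Lemma res_in a b f i : inW a b i -> res a b f i = f i.
Proof. by rewrite /res => ->. Qed.

Lemma res_out a b f i : ~~ inW a b i -> res a b f i = 0.
Proof. by rewrite /res => /negbTE ->. Qed.

Lemma res_add a b f f' :
  res a b (fun i => f i + f' i) = (fun i => res a b f i + res a b f' i).
Proof. by apply: functional_extensionality => i; rewrite /res; case: ifP; rewrite ?addr0. Qed.

Lemma res_mulr a b f (r : R) :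
  res a b (fun i => f i * r) = (fun i => res a b f i * r).
Proof. by apply: functional_extensionality => i; rewrite /res; case: ifP; rewrite ?mul0r. Qed.

Lemma res_LS_proof a b f : exists N, forall i, i < N -> res a b f i = 0.
Proof. by exists (- a%:Z) => i hi; rewrite res_out //; move: hi; rewrite /inW; lia. Qed.

Definition LS_res a b f : LS := exist _ (res a b f) (res_LS_proof a b f).

Lemma tpow_LS_res a b f : tpow (- a%:Z) (sval (LS_res a b f)).
Proof. by move=> i hi; rewrite /= res_out //; move: hi; rewrite /inW; lia. Qed.

Lemma LS_add_proof (f g : LS) :
  exists N, forall i, i < N -> sval f i + sval g i = 0.
Proof.
have [a fa] := LS_tpow_ex f; have [b gb] := LS_tpow_ex g.
by exists (- (maxn a b)%:Z) => i hi; rewrite fa ?gb ?addr0 //; lia.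
Qed.

Definition LS_add (f g : LS) : LS := exist _ _ (LS_add_proof f g).

Lemma LS_sub_proof (f g : LS) :
  exists N, forall i, i < N -> sval f i - sval g i = 0.
Proof.
have [a fa] := LS_tpow_ex f; have [b gb] := LS_tpow_ex g.
by exists (- (maxn a b)%:Z) => i hi; rewrite fa ?gb ?subr0 //; lia.
Qed.

Definition LS_sub (f g : LS) : LS := exist _ _ (LS_sub_proof f g).

Lemma LS_scale_proof (s : k) (f : LS) :
  exists N, forall i, i < N -> s *: sval f i = 0.
Proof. by have [a fa] := LS_tpow_ex f; exists (- a%:Z) => i hi; rewrite fa ?scaler0. Qed.

Definition LS_scale (s : k) (f : LS) : LS := exist _ _ (LS_scale_proof s f).

Definition rlinear g :=
  (forall f f', g (fun i => f i + f' i) = (fun i => g f i + g f' i)) /\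
  (forall f (r : R), g (fun i => f i * r) = (fun i => g f i * r)).

Lemma rlinear_comp g1 g2 : rlinear g1 -> rlinear g2 -> rlinear (g1 \o g2).
Proof. by case=> D1 M1 [D2 M2]; split=> f f' /=; rewrite ?D2 ?D1 ?M2 ?M1. Qed.

Lemma rlinear_add g1 g2 :
  rlinear g1 -> rlinear g2 -> rlinear (fun f i => g1 f i + g2 f i).
Proof.
case=> D1 M1 [D2 M2]; split=> f f'; apply: functional_extensionality => i.
- by rewrite D1 D2 addrACA.
- by rewrite M1 M2 mulrDl.
Qed.

Lemma rlinear_scale (s : k) g : rlinear g -> rlinear (fun f i => s *: g f i).
Proof.
case=> D M; split=> f f'; apply: functional_extensionality => i.
- by rewrite D scalerDr.
- by rewrite M scalerAl.
Qed.

Section HomC.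
Variables (a b c d : nat) (g : Fn).
Hypothesis gH : isHomC a b c d g.

Lemma isHomC_local f f' : (forall i, inW a b i -> f i = f' i) -> g f = g f'.
Proof. by case: gH => gloc _ _ _; apply: gloc. Qed.

Lemma isHomC_out f i : ~~ inW c d i -> g f i = 0.
Proof. by case: gH => _ gout _ _; apply: gout. Qed.

Lemma isHomC_rlinear : rlinear g.
Proof. by case: gH. Qed.

Lemma isHomC_res b' f : (b <= b')%N -> g (res a b' f) = g f.
Proof. by move=> bb'; apply: isHomC_local => i /(inW_widen (leqnn a) bb'); apply: res_in. Qed.

Lemma isHomC_below f i : i < - c%:Z -> g f i = 0.
Proof. by move=> hi; apply: isHomC_out; move: hi; rewrite /inW; lia. Qed.

Lemma isHomC_above f i : d%:Z <= i -> g f i = 0.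
Proof. by move=> hi; apply: isHomC_out; move: hi; rewrite /inW; lia. Qed.

Lemma isHomC_vanish f i : (forall j, inW a b j -> f j = 0) -> g f i = 0.
Proof.
move=> f0; have [_ gM] := isHomC_rlinear.
have -> : g f = g (fun j => f j * 0) by apply: isHomC_local => j /f0 ->; rewrite mul0r.
by rewrite gM mulr0.
Qed.

End HomC.

Lemma isHomC_rrf a b c d g : rlinear g -> isHomC a b c d (rrf a b c d g).
Proof.
case=> gD gM; split.
- move=> f f' ff'; rewrite /rrf; congr (res c d (g _)).
  by apply: functional_extensionality => i; rewrite /res; case: ifP => // /ff'.
- by move=> f i hi; rewrite /rrf res_out.
- by move=> f f'; rewrite /rrf res_add gD res_add.
- by move=> f r; rewrite /rrf res_mulr gM res_mulr.
Qed.

Lemma isHomC_comp a b c b1 c2 d d1 g1 g2 :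
  isHomC c b1 c2 d1 g1 -> isHomC a b c d g2 -> isHomC a b c2 d1 (g1 \o g2).
Proof.
move=> H1 H2; have [gD gM] := rlinear_comp (isHomC_rlinear H1) (isHomC_rlinear H2).
split=> //.
- by move=> f f' ff'; rewrite /= (isHomC_local H2 ff').
- by move=> f i hi; rewrite /= (isHomC_out H1).
Qed.

Lemma isHomC_add a b c d g1 g2 : isHomC a b c d g1 -> isHomC a b c d g2 ->
  isHomC a b c d (fun f i => g1 f i + g2 f i).
Proof.
move=> H1 H2; have [gD gM] := rlinear_add (isHomC_rlinear H1) (isHomC_rlinear H2).
split=> //.
- by move=> f f' ff'; rewrite (isHomC_local H1 ff') (isHomC_local H2 ff').
- by move=> f i hi; rewrite (isHomC_out H1) // (isHomC_out H2) // addr0.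
Qed.

Lemma isHomC_scale a b c d (s : k) g :
  isHomC a b c d g -> isHomC a b c d (fun f i => s *: g f i).
Proof.
move=> H; have [gD gM] := rlinear_scale s (isHomC_rlinear H); split=> //.
- by move=> f f' ff'; rewrite (isHomC_local H ff').
- by move=> f i hi; rewrite (isHomC_out H) // scaler0.
Qed.

Lemma rrf_widen a b c d g b' c' f :
  isHomC a b c d g -> (b <= b')%N -> (c <= c')%N -> rrf a b' c' d g f =1 g f.
Proof.
move=> H bb' cc' i; rewrite /rrf (isHomC_res H _ bb').
case: (boolP (inW c' d i)) => hi; first exact: res_in.
by rewrite res_out // (isHomC_out H) //; apply: contra hi; apply: inW_widen.
Qed.

Lemma rrf_tpow a a' b b' c d g f :
  isHomC a' b c d g -> (b <= b')%N -> tpow (- a%:Z) f -> rrf a b' c d g f = g f.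
Proof.
move=> H bb' fa; apply: functional_extensionality => i; rewrite /rrf.
have -> : g (res a b' f) = g f.
  apply: (isHomC_local H) => j hj; case: (boolP (inW a b' j)) => hj'; first exact: res_in.
  by rewrite res_out // fa //; move: hj hj'; rewrite /inW; lia.
case: (boolP (inW c d i)) => hi; [exact: res_in | by rewrite res_out // (isHomC_out H)].
Qed.

Lemma eqB_eq a c d (p q : nat * Fn) : eqB a c d p q -> p.2 =2 q.2.
Proof.
case=> pH qH [b [pb qb pq]] f i.
by rewrite -(rrf_widen f pH pb (leqnn c)) pq (rrf_widen f qH qb (leqnn c)).
Qed.

Lemma eqB_of_eq a c d (p q : nat * Fn) :
  isHomC a p.1 c d p.2 -> isHomC a q.1 c d q.2 -> p.2 =2 q.2 -> eqB a c d p q.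
Proof.
move=> pH qH pq; split=> //; exists (maxn p.1 q.1); split; rewrite ?leq_maxl ?leq_maxr //.
apply: functional_extensionality => f; apply: functional_extensionality => i.
by rewrite (rrf_widen f pH (leq_maxl _ _) (leqnn c)) (rrf_widen f qH (leq_maxr _ _) (leqnn c)).
Qed.

Section ClB.
Variables (a c d : nat) (X : ClB R a c d).

Lemma ClB_inhabited : exists p, sval X p.
Proof. by case: X => P [x [xx xP]] /=; exists x; apply/xP. Qed.

Lemma ClB_homC p : sval X p -> isHomC a p.1 c d p.2.
Proof. by case: X => P [x [_ xP]] /= /xP []. Qed.

Lemma ClB_eq p p' : sval X p -> sval X p' -> p.2 =2 p'.2.
Proof.
case: X => P [x [_ xP]] /= /xP xp /xP xp' f i.
by rewrite -(eqB_eq xp) (eqB_eq xp').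
Qed.

End ClB.

Section ClC.
Variable a : nat.
Implicit Types (x y z : RawC R a).

Definition same_components x y := forall d p1 p2,
  sval (projT2 x d) p1 -> sval (projT2 y d) p2 -> p1.2 =2 p2.2.

Lemma eqCP x y :
  Defs.eqC x y <-> [/\ isProHom (projT2 x), isProHom (projT2 y) & same_components x y].
Proof.
split.
- case=> xP yP [c [xc yc xy]]; split=> // d p1 p2 xp1 yp2 f i.
  have := eqB_eq (xy d p1 p2 xp1 yp2) f i => /=.
  by rewrite (rrf_widen _ (ClB_homC xp1)) // (rrf_widen _ (ClB_homC yp2)).
- case=> xP yP xy; split=> //.
  exists (maxn (projT1 x) (projT1 y)); split; rewrite ?leq_maxl ?leq_maxr //.
  move=> d p1 p2 xp1 yp2; apply: eqB_of_eq => /=.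
  + exact/isHomC_rrf/isHomC_rlinear/(ClB_homC xp1).
  + exact/isHomC_rrf/isHomC_rlinear/(ClB_homC yp2).
  + move=> f i; rewrite (rrf_widen _ (ClB_homC xp1)) ?leq_maxl //.
    by rewrite (rrf_widen _ (ClB_homC yp2)) ?leq_maxr //; apply: (xy d).
Qed.

Lemma eqC_euclidean x y z : Defs.eqC x y -> Defs.eqC x z -> Defs.eqC y z.
Proof.
move=> /eqCP[_ yP xy] /eqCP[_ zP xz]; apply/eqCP; split=> // d p1 p2 yp1 zp2 f i.
have [p xp] := ClB_inhabited (projT2 x d).
by rewrite -(xy d p p1 xp yp1) (xz d p p2 xp zp2).
Qed.

Lemma eqC_sym x y : Defs.eqC x y -> Defs.eqC y x.
Proof.
move=> xy; have xx : Defs.eqC x x.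
  case/eqCP: xy => xP _ xy; apply/eqCP; split=> // d p1 p2 xp1 xp2 f i.
  have [p yp] := ClB_inhabited (projT2 y d).
  by rewrite (xy d p1 p xp1 yp) (xy d p2 p xp2 yp).
exact: eqC_euclidean xy xx.
Qed.

Variable X : ClC R a.

Lemma ClC_inhabited : exists x, sval X x.
Proof. by case: X => P [x [xx xP]] /=; exists x; apply/xP. Qed.

Lemma ClC_memP x y : sval X x -> (sval X y <-> Defs.eqC x y).
Proof.
case: X => P [x0 [_ x0P]] /= /x0P x0x; split.
- by move/x0P; apply: eqC_euclidean x0x.
- by move=> xy; apply/x0P; apply: eqC_euclidean (eqC_sym x0x) xy.
Qed.

Lemma ClC_isProHom x : sval X x -> isProHom (projT2 x).
Proof. by move=> Xx; have /(_ Xx)/eqCP[] := proj1 (ClC_memP x Xx). Qed.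

Lemma ClC_same_components x y : sval X x -> sval X y -> same_components x y.
Proof. by move=> Xx /(ClC_memP _ Xx)/eqCP[]. Qed.

End ClC.

Lemma isProHom_eq_below a (q : RawC R a) d d' p p' f i :
  isProHom (projT2 q) -> sval (projT2 q d) p -> sval (projT2 q d') p' ->
  (d <= d')%N -> i < d%:Z -> p.2 f i = p'.2 f i.
Proof.
move=> qP qp qp' dd' hi; rewrite (ClB_eq qp (qP d d' p' dd' qp') f i) /=.
rewrite /rrf (isHomC_res (ClB_homC qp') _ (leqnn _)).
case: (boolP (inW (projT1 q) d i)) => hw; first exact: res_in.
by rewrite res_out // (isHomC_below (ClB_homC qp')) //; move: hw hi; rewrite /inW; lia.
Qed.

Definition agrees (phi : LS -> LS) a d g := forall f : LS,
  tpow (- a%:Z) (sval f) -> forall i, i < d%:Z -> g (sval f) i = sval (phi f) i.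

Definition maps_into (phi : LS -> LS) a c := forall f : LS,
  tpow (- a%:Z) (sval f) -> tpow (- c%:Z) (sval (phi f)).

Lemma agrees_unique phi a b1 c1 b2 c2 d g1 g2 :
  isHomC a b1 c1 d g1 -> isHomC a b2 c2 d g2 ->
  agrees phi a d g1 -> agrees phi a d g2 -> g1 =2 g2.
Proof.
move=> H1 H2 A1 A2 f i.
case: (ltP i d%:Z) => hi; last by rewrite (isHomC_above H1) ?(isHomC_above H2).
rewrite -(isHomC_res H1 f (leq_maxl b1 b2)) -(isHomC_res H2 f (leq_maxr b1 b2)).
by rewrite (A1 (LS_res a _ f)) ?(A2 (LS_res a _ f)) //; apply: tpow_LS_res.
Qed.

Lemma eq_of_agrees (phi psi : LS -> LS) :
  (forall a d, exists g, agrees phi a d g /\ agrees psi a d g) ->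
  forall f : LS, sval (phi f) =1 sval (psi f).
Proof.
move=> A f i; have [a fa] := LS_tpow_ex f; have [g [phig psig]] := A a `|i|.+1.
by rewrite -(phig f fa i) ?(psig f fa i) //; lia.
Qed.

Lemma agrees_rrf phi a b c d g b' c' : isHomC a b c d g ->
  (b <= b')%N -> (c <= c')%N -> agrees phi a d g -> agrees phi a d (rrf a b' c' d g).
Proof. by move=> H bb' cc' A f fa i hi; rewrite (rrf_widen _ H bb' cc'); apply: A. Qed.

Lemma agrees_comp phi1 phi2 a c d b1 c1 d2 g1 g2 :
  isHomC c b1 c1 d g1 -> (b1 <= d2)%N -> maps_into phi2 a c ->
  agrees phi2 a d2 g2 -> agrees phi1 c d g1 -> agrees (phi1 \o phi2) a d (g1 \o g2).
Proof.
move=> H1 bd2 phi2ac A2 A1 f fa i hi /=.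
have -> : g1 (g2 (sval f)) = g1 (sval (phi2 f)).
  by apply: (isHomC_local H1) => j /andP[_ hj]; apply: A2 => //; lia.
exact: A1 (phi2ac f fa) i hi.
Qed.

Lemma agrees_add phi1 phi2 a d g1 g2 : agrees phi1 a d g1 -> agrees phi2 a d g2 ->
  agrees (fun f : LS => LS_add (phi1 f) (phi2 f)) a d (fun f i => g1 f i + g2 f i).
Proof. by move=> A1 A2 f fa i hi /=; rewrite A1 ?A2. Qed.

Lemma agrees_scale phi a d g (s : k) : agrees phi a d g ->
  agrees (fun f : LS => LS_scale s (phi f)) a d (fun f i => s *: g f i).
Proof. by move=> A f fa i hi /=; rewrite A. Qed.

Lemma agrees_id a c d : (a <= c)%N -> agrees id a d (rrf a d c d id).
Proof.
move=> ac f fa i hi; rewrite /rrf /=.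
case: (boolP (inW c d i)) => hc.
  case: (boolP (inW a d i)) => ha; first by rewrite !res_in.
  by rewrite res_in // res_out // fa //; move: ha hi; rewrite /inW; lia.
by rewrite res_out // fa //; move: hc hi; rewrite /inW; lia.
Qed.

Section Induced.
Variable e : EndLaurent R.

Lemma rep_coherent_le a1 a2 (q1 : RawC R a1) (q2 : RawC R a2) d1 d2 p1 p2 f i :
  (a1 <= a2)%N -> sval (sval e a1) q1 -> sval (sval e a2) q2 ->
  sval (projT2 q1 d1) p1 -> sval (projT2 q2 d2) p2 ->
  tpow (- a1%:Z) f -> i < d1%:Z -> i < d2%:Z -> p1.2 f i = p2.2 f i.
Proof.
move=> a12 eq1 eq2 qp1 qp2 fa hi1 hi2.
have [q0 [eq0 _ q20]] := proj2_sig e a1 a2 q2 a12 eq2.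
have [p qp] := ClB_inhabited (projT2 q2 d1).
have [p0 qp0] := ClB_inhabited (projT2 q0 d1).
rewrite (ClC_same_components eq1 eq0 qp1 qp0) (eqB_eq (q20 d1 p p0 qp qp0)) /=.
rewrite (rrf_tpow (ClB_homC qp) (leqnn _) fa).
have q2P := ClC_isProHom eq2; case: (leqP d1 d2) => d12.
- exact: isProHom_eq_below q2P qp qp2 d12 hi1.
- by symmetry; apply: isProHom_eq_below q2P qp2 qp (ltnW d12) hi2.
Qed.

Lemma rep_coherent a1 a2 (q1 : RawC R a1) (q2 : RawC R a2) d1 d2 p1 p2 f i :
  sval (sval e a1) q1 -> sval (sval e a2) q2 ->
  sval (projT2 q1 d1) p1 -> sval (projT2 q2 d2) p2 ->
  tpow (- a1%:Z) f -> tpow (- a2%:Z) f -> i < d1%:Z -> i < d2%:Z ->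
  p1.2 f i = p2.2 f i.
Proof.
move=> eq1 eq2 qp1 qp2 fa1 fa2 hi1 hi2; case: (leqP a1 a2) => a12.
- exact: rep_coherent_le a12 eq1 eq2 qp1 qp2 fa1 hi1 hi2.
- by symmetry; apply: rep_coherent_le (ltnW a12) eq2 eq1 qp2 qp1 fa2 hi2 hi1.
Qed.

Definition coef_witness (f : LS) (i : int) (r : R) :=
  exists a (q : RawC R a) d (p : nat * Fn),
    [/\ sval (sval e a) q, sval (projT2 q d) p, tpow (- a%:Z) (sval f),
        i < d%:Z & r = p.2 (sval f) i].

(* By [rep_coherent] every witness gives the same value, and a witness always
   exists, so the default [0] is never returned. *)
Definition induced_coef (f : LS) (i : int) : R :=
  epsilon (inhabits 0) (coef_witness f i).

Lemma induced_coefE a (q : RawC R a) d p (f : LS) i :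
  sval (sval e a) q -> sval (projT2 q d) p -> tpow (- a%:Z) (sval f) -> i < d%:Z ->
  induced_coef f i = p.2 (sval f) i.
Proof.
move=> eq qp fa hi; rewrite /induced_coef.
have /(epsilon_spec (inhabits 0)) : exists r, coef_witness f i r.
  by exists (p.2 (sval f) i), a, q, d, p.
case=> a' [q' [d' [p' [eq' qp' fa' hi' ->]]]].
exact: rep_coherent eq' eq qp' qp fa' fa hi' hi.
Qed.

Lemma induced_coef_below a (q : RawC R a) (f : LS) i :
  sval (sval e a) q -> tpow (- a%:Z) (sval f) -> i < - (projT1 q)%:Z ->
  induced_coef f i = 0.
Proof.
move=> eq fa hi; have [p qp] := ClB_inhabited (projT2 q 0).
by rewrite (induced_coefE eq qp fa) ?(isHomC_below (ClB_homC qp)) //; lia.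
Qed.

Lemma induced_LS_proof (f : LS) : exists N, forall i, i < N -> induced_coef f i = 0.
Proof.
have [a fa] := LS_tpow_ex f; have [q eq] := ClC_inhabited (sval e a).
by exists (- (projT1 q)%:Z) => i; apply: induced_coef_below eq fa.
Qed.

Definition induced (f : LS) : LS := exist _ (induced_coef f) (induced_LS_proof f).

Lemma agrees_induced a (q : RawC R a) d p :
  sval (sval e a) q -> sval (projT2 q d) p -> agrees induced a d p.2.
Proof. by move=> eq qp f fa i hi; rewrite /= (induced_coefE eq qp fa hi). Qed.

Lemma maps_into_induced a (q : RawC R a) :
  sval (sval e a) q -> maps_into induced a (projT1 q).
Proof. by move=> eq f fa i; apply: induced_coef_below eq fa. Qed.

End Induced.

Definition is_top (phi : LS -> LS) := [/\ isEndR phi, cond1 phi & cond2 phi].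

Lemma induced_rlinear_at e a i : exists g, rlinear g /\
  forall f : LS, tpow (- a%:Z) (sval f) -> sval (induced e f) i = g (sval f) i.
Proof.
have [q eq] := ClC_inhabited (sval e a); have [p qp] := ClB_inhabited (projT2 q `|i|.+1).
exists p.2; split; first exact: isHomC_rlinear (ClB_homC qp).
by move=> f fa; rewrite (agrees_induced eq qp fa) //; lia.
Qed.

Lemma isEndR_induced e : isEndR (induced e).
Proof.
split=> [f g h hfg | f g r hfr] i.
- have [a1 fa1] := LS_tpow_ex f; have [a2 ga2] := LS_tpow_ex g.
  have [a3 ha3] := LS_tpow_ex h.
  have [g0 [[g0D _] g0E]] := induced_rlinear_at e (maxn a1 (maxn a2 a3)) i.
  rewrite !g0E; try solve [apply: tpow_le fa1; lia | apply: tpow_le ga2; lia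
                          | apply: tpow_le ha3; lia].
  by rewrite (functional_extensionality _ _ hfg) g0D.
- have [a1 fa1] := LS_tpow_ex f; have [a2 ga2] := LS_tpow_ex g.
  have [g0 [[_ g0M] g0E]] := induced_rlinear_at e (maxn a1 a2) i.
  rewrite !g0E; try solve [apply: tpow_le fa1; lia | apply: tpow_le ga2; lia].
  by rewrite (functional_extensionality _ _ hfr) g0M.
Qed.

Lemma cond1_induced e : cond1 (induced e).
Proof.
move=> n; have [q eq] := ClC_inhabited (sval e `|n|%N).
exists (- (projT1 q)%:Z) => f fn; apply: (maps_into_induced eq).
by apply: tpow_le fn; lia.
Qed.

Lemma cond2_induced e : cond2 (induced e).
Proof.
move=> m; have [q eq] := ClC_inhabited (sval e 0%N).
have [p qp] := ClB_inhabited (projT2 q `|m|%N).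
exists p.1%:Z => f fb i hi.
have f0 : tpow (- 0%:Z) (sval f) by apply: tpow_le fb; lia.
rewrite -(agrees_induced eq qp f0); last by lia.
by apply: (isHomC_vanish (ClB_homC qp)) => j /andP[_ hj]; apply: fb.
Qed.

Lemma is_top_induced e : is_top (induced e).
Proof. by split; [apply: isEndR_induced | apply: cond1_induced | apply: cond2_induced]. Qed.

Lemma is_top_comp phi1 phi2 : is_top phi1 -> is_top phi2 -> is_top (phi1 \o phi2).
Proof.
case=> [[D1 M1] c11 c21] [[D2 M2] c12 c22]; split; [split|..].
- by move=> f g h hfg i; apply: D1; apply: D2 hfg.
- by move=> f g r hfr i; apply: M1; apply: M2 hfr.
- move=> n; have [n1 H1] := c12 n; have [n2 H2] := c11 n1.
  by exists n2 => f fn; apply: H2 (H1 _ fn).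
- move=> m; have [m1 H1] := c21 m; have [m2 H2] := c22 m1.
  by exists m2 => f fm; apply: H1 (H2 _ fm).
Qed.

Lemma is_top_id : is_top id.
Proof. by split; [split | move=> n; exists n | move=> m; exists m]. Qed.

Lemma is_top_add phi1 phi2 : is_top phi1 -> is_top phi2 ->
  is_top (fun f : LS => LS_add (phi1 f) (phi2 f)).
Proof.
case=> [[D1 M1] c11 c21] [[D2 M2] c12 c22]; split; [split|..].
- by move=> f g h hfg i /=; rewrite (D1 _ _ _ hfg) (D2 _ _ _ hfg) addrACA.
- by move=> f g r hfr i /=; rewrite (M1 _ _ _ hfr) (M2 _ _ _ hfr) mulrDl.
- move=> n; have [n1 H1] := c11 n; have [n2 H2] := c12 n.
  exists (- (`|n1| + `|n2|)%N%:Z) => f fn i hi /=.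
  by rewrite H1 ?H2 ?addr0 //; lia.
- move=> m; have [m1 H1] := c21 m; have [m2 H2] := c22 m.
  exists (`|m1| + `|m2|)%N%:Z => f fm i hi /=.
  by rewrite H1 ?H2 ?addr0 //; apply: tpow_le fm; lia.
Qed.

Lemma is_top_scale (s : k) phi : is_top phi -> is_top (fun f : LS => LS_scale s (phi f)).
Proof.
case=> [[D M] c1 c2]; split; [split|..].
- by move=> f g h hfg i /=; rewrite (D _ _ _ hfg) scalerDr.
- by move=> f g r hfr i /=; rewrite (M _ _ _ hfr) scalerAl.
- by move=> n; have [n' H] := c1 n; exists n' => f fn i hi /=; rewrite H ?scaler0.
- by move=> m; have [m' H] := c2 m; exists m' => f fm i hi /=; rewrite H ?scaler0.
Qed.

Definition top_of_tate e : EndTop R := exist _ (induced e) (is_top_induced e).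

Definition top_comp (phi1 phi2 : EndTop R) : EndTop R :=
  exist _ _ (is_top_comp (proj2_sig phi1) (proj2_sig phi2)).
Definition top_id : EndTop R := exist _ _ is_top_id.
Definition top_add (phi1 phi2 : EndTop R) : EndTop R :=
  exist _ _ (is_top_add (proj2_sig phi1) (proj2_sig phi2)).
Definition top_scale (s : k) (phi : EndTop R) : EndTop R :=
  exist _ _ (is_top_scale s (proj2_sig phi)).

Section TateOfTop.
Variables (phi : LS -> LS) (phiT : is_top phi).

Definition window_map a b c d : Fn := fun f => res c d (sval (phi (LS_res a b f))).

Lemma isHomC_window_map a b c d : isHomC a b c d (window_map a b c d).
Proof.
case: phiT => [[phiD phiM] _ _]; split.
- move=> f f' ff'; rewrite /window_map; congr (res c d (sval (phi _))).
  by apply: LS_ext => i /=; rewrite /res; case: ifP => // /ff'.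
- by move=> f i hi; rewrite /window_map res_out.
- move=> f f'; apply: functional_extensionality => i; rewrite /window_map /res.
  case: ifP => _; last by rewrite addr0.
  by apply: phiD => j /=; rewrite res_add.
- move=> f r; apply: functional_extensionality => i; rewrite /window_map /res.
  case: ifP => _; last by rewrite mul0r.
  by apply: phiM => j /=; rewrite res_mulr.
Qed.

Lemma agrees_window_map a c d :
  maps_into phi a c -> exists b, agrees phi a d (window_map a b c d).
Proof.
(* f = res_{a,m'} f + tail with tail in t^{m'}R[[t]], so phi tail vanishes
   below d by condition (2). *)
case: phiT => [[phiD _] _ phi2] phiac; have [m' phim'] := phi2 d%:Z.
exists `|m'|%N => f fa i hi; pose tail := LS_sub f (LS_res a `|m'| (sval f)).
have tail0 : sval (phi tail) i = 0.
  apply: (phim' tail) hi => j hj /=; case: (boolP (inW a `|m'| j)) => hw.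
    by rewrite res_in ?subrr.
  by rewrite res_out // fa ?subr0 //; move: hw hj; rewrite /inW; lia.
have split_f : sval f =1 fun j => sval (LS_res a `|m'| (sval f)) j + sval tail j.
  by move=> j /=; rewrite addrC subrK.
rewrite /window_map; case: (boolP (inW c d i)) => hw.
  by rewrite res_in // (phiD _ _ _ split_f) tail0 addr0.
by rewrite res_out // phiac //; move: hw hi; rewrite /inW; lia.
Qed.

Definition window_rep a c d (y : nat * Fn) :=
  isHomC a y.1 c d y.2 /\ agrees phi a d y.2.

Lemma window_class_proof a c d : maps_into phi a c ->
  exists x, eqB a c d x x /\ forall y, window_rep a c d y <-> eqB a c d x y.
Proof.
move=> phiac; have [b wA] := agrees_window_map d phiac.
have wH := isHomC_window_map a b c d.
exists (b, window_map a b c d); split; first by apply: eqB_of_eq.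
move=> y; split=> [[yH yA] | xy].
  by apply: eqB_of_eq => //; apply: agrees_unique wH yH wA yA.
case: (xy) => _ yH _; split=> // f fa i hi.
by rewrite -(eqB_eq xy); apply: wA.
Qed.

Definition window_class a c d (phiac : maps_into phi a c) : ClB R a c d :=
  exist _ (window_rep a c d) (window_class_proof d phiac).

Definition pro_rep a (q : RawC R a) := isProHom (projT2 q) /\
  forall d p, sval (projT2 q d) p -> agrees phi a d p.2.

Lemma maps_into_pro_rep a (q : RawC R a) : pro_rep q -> maps_into phi a (projT1 q).
Proof.
case=> _ qA f fa i hi; have [p qp] := ClB_inhabited (projT2 q 0).
by rewrite -(qA 0%N p qp f fa i) ?(isHomC_below (ClB_homC qp)) //; lia.
Qed.

Lemma pro_rep_eqC a (x y : RawC R a) : pro_rep x -> (pro_rep y <-> Defs.eqC x y).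
Proof.
case=> xP xA; split=> [[yP yA] | /eqCP[_ yP xy]].
- apply/eqCP; split=> // d p1 p2 xp1 yp2.
  exact: agrees_unique (ClB_homC xp1) (ClB_homC yp2) (xA _ _ xp1) (yA _ _ yp2).
- split=> // d p yp f fa i hi; have [px xp] := ClB_inhabited (projT2 x d).
  by rewrite -(xy d px p xp yp); apply: xA xp f fa i hi.
Qed.

Definition pro_window a c (phiac : maps_into phi a c) : RawC R a :=
  existT _ c (fun d => window_class d phiac).

Lemma pro_rep_window a c (phiac : maps_into phi a c) : pro_rep (pro_window phiac).
Proof.
split=> [d d' p dd' /= [pH pA] | d p [_ pA] //].
split=> /=; first exact/isHomC_rrf/isHomC_rlinear/pH.
move=> f fa i hi; rewrite /rrf (isHomC_res pH _ (leqnn _)).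
case: (boolP (inW c d i)) => hw; first by rewrite res_in // pA //; lia.
by rewrite res_out // phiac //; move: hw hi; rewrite /inW; lia.
Qed.

Lemma maps_into_ex a : exists c, maps_into phi a c.
Proof.
case: phiT => _ phi1 _; have [n' phin'] := phi1 (- a%:Z).
by exists `|n'|%N => f fa; apply: tpow_le (phin' f fa); lia.
Qed.

Lemma pro_class_proof a : exists x : RawC R a,
  Defs.eqC x x /\ forall y : RawC R a, pro_rep y <-> Defs.eqC x y.
Proof.
have [c phiac] := maps_into_ex a; have xR := pro_rep_window phiac.
by exists (pro_window phiac); split; [apply/(pro_rep_eqC _ xR) | move=> y; apply: pro_rep_eqC].
Qed.

Definition pro_class a : ClC R a := exist _ (@pro_rep a) (pro_class_proof a).

Lemma isIndHom_pro_class : isIndHom pro_class.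
Proof.
move=> a a' q aa' /= qR; have [_ qA] := qR.
have phiac : maps_into phi a (projT1 q).
  by move=> f fa; apply: (maps_into_pro_rep qR); apply: tpow_le fa; lia.
exists (pro_window phiac); split=> //; first exact: pro_rep_window.
move=> d p p0 qp [p0H p0A]; have pH := ClB_homC qp.
have rH := isHomC_rrf a p.1 (projT1 q) d (isHomC_rlinear pH).
apply: eqB_of_eq => //; apply: agrees_unique p0H rH p0A _ => f fa i hi.
rewrite (rrf_tpow pH (leqnn _) fa); apply: (qA d p qp) hi.
by apply: tpow_le fa; lia.
Qed.

End TateOfTop.

Definition tate_of_top (phi : EndTop R) : EndLaurent R :=
  exist _ (pro_class (proj2_sig phi)) (isIndHom_pro_class (phiT := proj2_sig phi)).

Lemma induced_tate_of_top phi : induced (tate_of_top phi) = sval phi.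
Proof.
apply: functional_extensionality => f; apply: LS_ext; apply: eq_of_agrees => a d.
have [q qR] := ClC_inhabited (sval (tate_of_top phi) a).
have [p qp] := ClB_inhabited (projT2 q d).
by exists p.2; split; [apply: agrees_induced qR qp | apply: (proj2 qR)].
Qed.

Lemma tate_of_topK : cancel tate_of_top top_of_tate.
Proof. by move=> phi; apply: sig_ext; apply: induced_tate_of_top. Qed.

Lemma top_of_tateK : cancel top_of_tate tate_of_top.
Proof.
move=> e; apply: sig_ext; apply: functional_extensionality_dep => a /=.
apply: sig_ext; apply: functional_extensionality => y /=.
apply: propositional_extensionality.
have [x ex] := ClC_inhabited (sval e a).
have xR : pro_rep (induced e) x.
  by split=> [|d p xp]; [apply: ClC_isProHom ex | apply: agrees_induced ex xp].
exact: iff_trans (pro_rep_eqC y xR) (iff_sym (ClC_memP y ex)).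
Qed.

Lemma eqB_agreesP e a (q : RawC R a) d p c b g :
  sval (sval e a) q -> sval (projT2 q d) p -> (projT1 q <= c)%N -> isHomC a b c d g ->
  eqB a c d (b, g) (p.1, rrf a p.1 c d p.2) <-> agrees (induced e) a d g.
Proof.
move=> eq qp qc gH; have pH := ClB_homC qp; have pA := agrees_induced eq qp.
have rH := isHomC_rrf a p.1 c d (isHomC_rlinear pH).
split=> [gp f fa i hi | gA].
- by move: (eqB_eq gp (sval f) i) => /= ->; rewrite (rrf_widen _ pH) //; apply: pA.
- apply: eqB_of_eq => //=.
  exact: agrees_unique gH rH gA (agrees_rrf pH (leqnn _) qc pA).
Qed.

Lemma comp_window_agrees e1 e2 a (q2 : RawC R a) (q1 : RawC R (projT1 q2)) d p1 p2 c :
  sval (sval e2 a) q2 -> sval (sval e1 (projT1 q2)) q1 ->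
  sval (projT2 q1 d) p1 -> sval (projT2 q2 p1.1) p2 -> (projT1 q1 <= c)%N ->
  isHomC a p2.1 c d (rrf a p2.1 c d (p1.2 \o p2.2)) /\
  agrees (induced e1 \o induced e2) a d (rrf a p2.1 c d (p1.2 \o p2.2)).
Proof.
move=> eq2 eq1 qp1 qp2 qc; have p1H := ClB_homC qp1; have p2H := ClB_homC qp2.
have cH := isHomC_comp p1H p2H; split; first exact/isHomC_rrf/isHomC_rlinear/cH.
apply: agrees_rrf cH (leqnn _) qc _.
exact: agrees_comp p1H (leqnn _) (maps_into_induced eq2) (agrees_induced eq2 qp2)
  (agrees_induced eq1 qp1).
Qed.

Lemma IsCompE_tate_of_top e1 e2 :
  IsCompE e1 e2 (tate_of_top (top_comp (top_of_tate e1) (top_of_tate e2))).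
Proof.
move=> a q2 q1 q3 eq2 eq1 eq3.
exists (maxn (projT1 q1) (projT1 q3)); split; rewrite ?leq_maxl ?leq_maxr //.
move=> d p1 p2 p3 qp1 qp2 qp3.
have [gH gA] := comp_window_agrees eq2 eq1 qp1 qp2 (leq_maxl _ (projT1 q3)).
by apply/(eqB_agreesP eq3 qp3 (leq_maxr (projT1 q1) _) gH); rewrite induced_tate_of_top.
Qed.

Lemma induced_IsCompE e1 e2 e3 :
  IsCompE e1 e2 e3 -> induced e3 = induced e1 \o induced e2.
Proof.
move=> E; apply: functional_extensionality => f; apply: LS_ext; apply: eq_of_agrees => a d.
have [q2 eq2] := ClC_inhabited (sval e2 a).
have [q1 eq1] := ClC_inhabited (sval e1 (projT1 q2)).
have [q3 eq3] := ClC_inhabited (sval e3 a).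
have [c [q1c q3c Ec]] := E a q2 q1 q3 eq2 eq1 eq3.
have [p1 qp1] := ClB_inhabited (projT2 q1 d).
have [p2 qp2] := ClB_inhabited (projT2 q2 p1.1).
have [p3 qp3] := ClB_inhabited (projT2 q3 d).
have [gH gA] := comp_window_agrees eq2 eq1 qp1 qp2 q1c.
exists (rrf a p2.1 c d (p1.2 \o p2.2)); split=> //.
exact/(eqB_agreesP eq3 qp3 q3c gH)/Ec.
Qed.

Lemma isHomC_rrf_id a c d : isHomC a d c d (rrf a d c d (id : Fn)).
Proof. by apply: isHomC_rrf; split. Qed.

Lemma IsIdE_tate_of_top : IsIdE (tate_of_top top_id).
Proof.
move=> a q eq; exists (maxn a (projT1 q)); split; rewrite ?leq_maxl ?leq_maxr //.
move=> d p qp; apply/(eqB_agreesP eq qp (leq_maxr a _) (isHomC_rrf_id _ _ _)).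
by rewrite induced_tate_of_top; apply: agrees_id (leq_maxl _ _).
Qed.

Lemma induced_IsIdE e : IsIdE e -> induced e = id.
Proof.
move=> E; apply: functional_extensionality => f; apply: LS_ext; apply: eq_of_agrees => a d.
have [q eq] := ClC_inhabited (sval e a); have [c [ac qc Ec]] := E a q eq.
have [p qp] := ClB_inhabited (projT2 q d).
exists (rrf a d c d id); split; last exact: agrees_id.
exact/(eqB_agreesP eq qp qc (isHomC_rrf_id _ _ _))/Ec.
Qed.

Lemma add_window_agrees e1 e2 a (q1 q2 : RawC R a) d p1 p2 c :
  sval (sval e1 a) q1 -> sval (sval e2 a) q2 ->
  sval (projT2 q1 d) p1 -> sval (projT2 q2 d) p2 ->
  (projT1 q1 <= c)%N -> (projT1 q2 <= c)%N ->
  isHomC a (maxn p1.1 p2.1) c d (fun f i =>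
    rrf a (maxn p1.1 p2.1) c d p1.2 f i + rrf a (maxn p1.1 p2.1) c d p2.2 f i) /\
  agrees (fun f : LS => LS_add (induced e1 f) (induced e2 f)) a d (fun f i =>
    rrf a (maxn p1.1 p2.1) c d p1.2 f i + rrf a (maxn p1.1 p2.1) c d p2.2 f i).
Proof.
move=> eq1 eq2 qp1 qp2 q1c q2c; have p1H := ClB_homC qp1; have p2H := ClB_homC qp2.
split; first by apply: isHomC_add; apply/isHomC_rrf/isHomC_rlinear; [apply: p1H | apply: p2H].
apply: agrees_add.
- exact: agrees_rrf p1H (leq_maxl _ _) q1c (agrees_induced eq1 qp1).
- exact: agrees_rrf p2H (leq_maxr _ _) q2c (agrees_induced eq2 qp2).
Qed.

Lemma IsAddE_tate_of_top e1 e2 :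
  IsAddE e1 e2 (tate_of_top (top_add (top_of_tate e1) (top_of_tate e2))).
Proof.
move=> a q1 q2 q3 eq1 eq2 eq3.
pose c := maxn (projT1 q1) (maxn (projT1 q2) (projT1 q3)).
have [q1c q2c q3c] : [/\ projT1 q1 <= c, projT1 q2 <= c & projT1 q3 <= c]%N.
  by rewrite /c; split; lia.
exists c; split=> // d p1 p2 p3 qp1 qp2 qp3.
have [gH gA] := add_window_agrees eq1 eq2 qp1 qp2 q1c q2c.
by apply/(eqB_agreesP eq3 qp3 q3c gH); rewrite induced_tate_of_top.
Qed.

Lemma induced_IsAddE e1 e2 e3 : IsAddE e1 e2 e3 ->
  forall f : LS, sval (induced e3 f) =1 sval (LS_add (induced e1 f) (induced e2 f)).
Proof.
move=> E; apply: eq_of_agrees => a d.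
have [q1 eq1] := ClC_inhabited (sval e1 a); have [q2 eq2] := ClC_inhabited (sval e2 a).
have [q3 eq3] := ClC_inhabited (sval e3 a).
have [c [q1c q2c q3c Ec]] := E a q1 q2 q3 eq1 eq2 eq3.
have [p1 qp1] := ClB_inhabited (projT2 q1 d); have [p2 qp2] := ClB_inhabited (projT2 q2 d).
have [p3 qp3] := ClB_inhabited (projT2 q3 d).
have [gH gA] := add_window_agrees eq1 eq2 qp1 qp2 q1c q2c.
by eexists; split; [apply/(eqB_agreesP eq3 qp3 q3c gH)/Ec | apply: gA].
Qed.

Lemma scale_window_agrees (s : k) e1 a (q1 : RawC R a) d p1 c :
  sval (sval e1 a) q1 -> sval (projT2 q1 d) p1 -> (projT1 q1 <= c)%N ->
  isHomC a p1.1 c d (fun f i => s *: rrf a p1.1 c d p1.2 f i) /\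
  agrees (fun f : LS => LS_scale s (induced e1 f)) a d
    (fun f i => s *: rrf a p1.1 c d p1.2 f i).
Proof.
move=> eq1 qp1 q1c; have p1H := ClB_homC qp1.
split; first exact/isHomC_scale/isHomC_rrf/isHomC_rlinear/p1H.
exact/agrees_scale/(agrees_rrf p1H (leqnn _) q1c)/(agrees_induced eq1 qp1).
Qed.

Lemma IsScaleE_tate_of_top s e1 : IsScaleE s e1 (tate_of_top (top_scale s (top_of_tate e1))).
Proof.
move=> a q1 q2 eq1 eq2.
exists (maxn (projT1 q1) (projT1 q2)); split; rewrite ?leq_maxl ?leq_maxr //.
move=> d p1 p2 qp1 qp2.
have [gH gA] := scale_window_agrees s eq1 qp1 (leq_maxl _ (projT1 q2)).
by apply/(eqB_agreesP eq2 qp2 (leq_maxr (projT1 q1) _) gH); rewrite induced_tate_of_top.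
Qed.

Lemma induced_IsScaleE s e1 e2 : IsScaleE s e1 e2 ->
  forall f : LS, sval (induced e2 f) =1 sval (LS_scale s (induced e1 f)).
Proof.
move=> E; apply: eq_of_agrees => a d.
have [q1 eq1] := ClC_inhabited (sval e1 a); have [q2 eq2] := ClC_inhabited (sval e2 a).
have [c [q1c q2c Ec]] := E a q1 q2 eq1 eq2.
have [p1 qp1] := ClB_inhabited (projT2 q1 d); have [p2 qp2] := ClB_inhabited (projT2 q2 d).
have [gH gA] := scale_window_agrees s eq1 qp1 q1c.
by eexists; split; [apply/(eqB_agreesP eq2 qp2 q2c gH)/Ec | apply: gA].
Qed.

End EndLaurentTop.

Theorem proposition2p4 (k : fieldType) (R : algType k) :
  (* the algebra operations on E(R) are everywhere defined *)
  [/\ (forall e1 e2 : EndLaurent R, exists e3, IsCompE e1 e2 e3),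
      (exists e : EndLaurent R, IsIdE e),
      (forall e1 e2 : EndLaurent R, exists e3, IsAddE e1 e2 e3) &
      (forall (s : k) (e1 : EndLaurent R), exists e2, IsScaleE s e1 e2)] /\
  (* and the canonical map E(R) -> EndTop R is an algebra isomorphism *)
  exists Phi : EndLaurent R -> EndTop R,
    [/\ bijective Phi,
        (forall e, Canon e (sval (Phi e))) &
     [/\ (forall e1 e2 e3, IsCompE e1 e2 e3 ->
           sval (Phi e3) = sval (Phi e1) \o sval (Phi e2)),
        (forall e, IsIdE e -> sval (Phi e) = id),
        (forall e1 e2 e3, IsAddE e1 e2 e3 -> forall f i,
           sval (sval (Phi e3) f) i
             = sval (sval (Phi e1) f) i + sval (sval (Phi e2) f) i) &
        (forall s e1 e2, IsScaleE s e1 e2 -> forall f i,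
           sval (sval (Phi e2) f) i = s *: sval (sval (Phi e1) f) i)]].
Proof.
split.
  split=> [e1 e2 | | e1 e2 | s e1]; eexists.
  - exact: IsCompE_tate_of_top.
  - exact: IsIdE_tate_of_top.
  - exact: IsAddE_tate_of_top.
  - exact: IsScaleE_tate_of_top.
exists (@top_of_tate _ R); split.
- by exists (@tate_of_top _ R); [apply: top_of_tateK | apply: tate_of_topK].
- move=> e a q eq d p qp f fa; split; first exact: (maps_into_induced eq).
  by move=> i /andP[_ hi]; rewrite (agrees_induced eq qp fa).
- by split; [apply: induced_IsCompE | apply: induced_IsIdE | apply: induced_IsAddE
            | apply: induced_IsScaleE].
Qed.
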